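(* Let $\rho_1,\rho_2$ be two rank-two density operators on $\mathbb{C}^2\otimes\mathbb{C}^2$ with orthogonal supports. Then the following are equivalent: (a) $\rho_1,\rho_2$ can be perfectly distinguished by a separable POVM; (b) $\rho_1,\rho_2$ can be perfectly distinguished by LOCC; (c) the orthogonal projectors onto the supports of $\rho_1$ and of $\rho_2$ are both separable.
   Context: A positive semidefinite operator on $\mathbb{C}^2\otimes\mathbb{C}^2$ is separable if it is a nonnegative linear combination of product projectors $|a\rangle\langle a|\otimes|b\rangle\langle b|$; a POVM is separable if all its elements are separable. LOCC means measurements implementable by local operations on each qubit and classical communication between the two parties. A POVM $\{\Pi_1,\Pi_2\}$ perfectly distinguishes $\rho_1,\rho_2$ if $\mathrm{tr}(\Pi_i\rho_j)=\delta_{ij}$. *)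

(* Complex scalars: an arbitrary numClosedFieldType C
   (algebraically closed field with conjugation and partial order,
   e.g. algC). *)
From HB Require Import structures.
From mathcomp Require Import all_boot all_order all_algebra.
Set Implicit Arguments. Unset Strict Implicit. Unset Printing Implicit Defensive.
Import Order.TTheory GRing.Theory Num.Theory.
Local Open Scope ring_scope.

Section QDefs.
Variable C : numClosedFieldType.

Definition adj (m n : nat) (A : 'M[C]_(m, n)) : 'M[C]_(n, m) :=
  (map_mx Num.conj A)^T.

(* Kronecker (tensor) product; C^m1 (x) C^m2 ~ C^(m1*m2) via mxvec_index *)
Definition kron (m1 n1 m2 n2 : nat) (A : 'M[C]_(m1, n1)) (B : 'M[C]_(m2, n2))
  : 'M[C]_(m1 * m2, n1 * n2) :=
  \sum_(i1 < m1) \sum_(j1 < n1) \sum_(i2 < m2) \sum_(j2 < n2)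
     (A i1 j1 * B i2 j2) *: delta_mx (mxvec_index i1 i2) (mxvec_index j1 j2).

Definition psd (n : nat) (A : 'M[C]_n) : Prop :=
  adj A = A /\ forall v : 'cV[C]_n, 0 <= (adj v *m A *m v) 0 0.

Definition density (n : nat) (rho : 'M[C]_n) : Prop :=
  psd rho /\ \tr rho = 1.

(* supports (ranges) of A and B are orthogonal: <Au, Bv> = 0 for all u, v *)
Definition orth_supports (n : nat) (A B : 'M[C]_n) : Prop :=
  adj A *m B = 0.

(* P is the orthogonal projector onto the support (column space) of rho *)
Definition supp_proj (n : nat) (P rho : 'M[C]_n) : Prop :=
  adj P = P /\ P *m P = P /\ (P^T == rho^T)%MS.

Definition ketbra (n : nat) (a : 'cV[C]_n) : 'M[C]_n := a *m adj a.

Definition unit_vec (n : nat) (a : 'cV[C]_n) : Prop := adj a *m a = 1%:M.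

Definition separable (A : 'M[C]_(2 * 2)) : Prop :=
  exists (k : nat) (c : 'I_k -> C) (a b : 'I_k -> 'cV[C]_2),
    (forall i, 0 <= c i) /\ (forall i, unit_vec (a i)) /\
    (forall i, unit_vec (b i)) /\
    A = \sum_(i < k) c i *: kron (ketbra (a i)) (ketbra (b i)).

Definition perfectly_distinguishes (n : nat) (Pi1 Pi2 rho1 rho2 : 'M[C]_n)
  : Prop :=
  \tr (Pi1 *m rho1) = 1 /\ \tr (Pi1 *m rho2) = 0 /\
  \tr (Pi2 *m rho1) = 0 /\ \tr (Pi2 *m rho2) = 1.

Definition separable_POVM (Pi1 Pi2 : 'M[C]_(2 * 2)) : Prop :=
  separable Pi1 /\ separable Pi2 /\ Pi1 + Pi2 = 1%:M.

(* The current local dimensions of Alice's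
   and Bob's systems are da and db (they may change, e.g. via ancillas).
   At each node one party applies a local instrument with finitely many
   outcomes, given by Kraus operators K j : C^da -> C^(d j); the outcome is
   broadcast and the protocol continues depending on it.  A leaf announces
   the final outcome (false = "rho1", true = "rho2"). *)
Inductive LOCC : nat -> nat -> Type :=
| Leaf (da db : nat) (o : bool) : LOCC da db
| AliceStep (da db k : nat) (d : 'I_k -> nat)
    (K : forall j : 'I_k, 'M[C]_(d j, da))
    (next : forall j : 'I_k, LOCC (d j) db) : LOCC da db
| BobStep (da db k : nat) (d : 'I_k -> nat)
    (K : forall j : 'I_k, 'M[C]_(d j, db))
    (next : forall j : 'I_k, LOCC da (d j)) : LOCC da db.

Fixpoint LOCC_wf (da db : nat) (p : LOCC da db) : Prop :=
  match p with
  | Leaf _ _ _ => True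
  | AliceStep da db k d K next =>
      \sum_(j < k) adj (K j) *m K j = 1%:M /\ forall j, LOCC_wf (next j)
  | BobStep da db k d K next =>
      \sum_(j < k) adj (K j) *m K j = 1%:M /\ forall j, LOCC_wf (next j)
  end.

(* POVM element of outcome o implemented by protocol p *)
Fixpoint LOCC_effect (o : bool) (da db : nat) (p : LOCC da db)
  : 'M[C]_(da * db) :=
  match p in LOCC da db return 'M[C]_(da * db) with
  | Leaf da db o' => if o' == o then 1%:M else 0
  | AliceStep da db k d K next =>
      \sum_(j < k) adj (kron (K j) (1%:M : 'M[C]_db))
                     *m LOCC_effect o (next j) *m kron (K j) (1%:M : 'M[C]_db)
  | BobStep da db k d K next =>
      \sum_(j < k) adj (kron (1%:M : 'M[C]_da) (K j))
                     *m LOCC_effect o (next j) *m kron (1%:M : 'M[C]_da) (K j)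
  end.

End QDefs.

(* Orthogonality
   and the ranks force P1 + P2 = 1.  The three conditions are then linked:
   - separable support projectors give the separable POVM {P1, P2};
   - conversely, a separable POVM {Pi1, Pi2} distinguishing the states has
     rho2 Pi1 = rho1 Pi2 = 0 (a sum of product projectors with zero weight
     on a PSD operator lies in its kernel), which forces Pi_i = P_i;
   - every LOCC effect is a sum of product projectors, being obtained from
     the identity by local conjugations and sums;
   - the substantial direction is a structure theorem: if two complementary
     projectors on C^2 (x) C^2 are both sums of product projectors, one of
     them has the one-way form E (x) Q0 + (1 - E) (x) Q1 (or its mirror
     image) with E, Q0, Q1 projectors.  This is the effect of a two-round
     protocol where one party measures {E, 1 - E} and the other then
     measures {Q_j, 1 - Q_j}. *)

From HB Require Import structures.
From mathcomp Require Import all_boot all_order all_algebra.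
From mathcomp Require Import ring.
Import Order.TTheory GRing.Theory Num.Theory.
Local Open Scope ring_scope.

Set Implicit Arguments. Unset Strict Implicit. Unset Printing Implicit Defensive.

Section Adjoint.
Variable C : numClosedFieldType.

Lemma dagE m n (A : 'M[C]_(m, n)) i j : adj A i j = (A j i)^*.
Proof. by rewrite /adj !mxE. Qed.

Lemma dagK m n (A : 'M[C]_(m, n)) : adj (adj A) = A.
Proof. by apply/matrixP => i j; rewrite !dagE conjCK. Qed.

Lemma dagM m n p (A : 'M[C]_(m, n)) (B : 'M[C]_(n, p)) :
  adj (A *m B) = adj B *m adj A.
Proof.
apply/matrixP => i j; rewrite dagE !mxE rmorph_sum; apply: eq_bigr => k _.
by rewrite !dagE rmorphM mulrC.
Qed.

Lemma dagD m n (A B : 'M[C]_(m, n)) : adj (A + B) = adj A + adj B.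
Proof. by apply/matrixP => i j; rewrite !(dagE, mxE) rmorphD. Qed.

Lemma dagZ m n c (A : 'M[C]_(m, n)) : adj (c *: A) = c^* *: adj A.
Proof. by apply/matrixP => i j; rewrite !(dagE, mxE) rmorphM. Qed.

Lemma dagB m n (A B : 'M[C]_(m, n)) : adj (A - B) = adj A - adj B.
Proof. by rewrite -!scaleN1r dagD dagZ rmorphN rmorph1. Qed.

Lemma dag0 m n : adj (0 : 'M[C]_(m, n)) = 0.
Proof. by apply/matrixP => i j; rewrite !(dagE, mxE) rmorph0. Qed.

Lemma dag1 n : adj (1%:M : 'M[C]_n) = 1%:M.
Proof.
apply/matrixP => i j; rewrite !(dagE, mxE) eq_sym.
by case: (i == j); rewrite /= ?rmorph1 ?rmorph0.
Qed.

Lemma dag_conj_tr n (A : 'M[C]_n) : adj A = map_mx Num.conj A^T.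
Proof. by apply/matrixP => i j; rewrite dagE !mxE. Qed.

End Adjoint.

Section Kronecker.
Variable C : numClosedFieldType.

Lemma mxvec_index_eq m n (i i' : 'I_m) (j j' : 'I_n) :
  (mxvec_index i j == mxvec_index i' j') = (i == i') && (j == j').
Proof.
have [g gK _] := curry_mxvec_bij m n.
apply/eqP/andP => [E | [/eqP -> /eqP ->] //].
have := congr1 g E; rewrite (gK (i, j) isT) (gK (i', j') isT) => -[-> ->].
by split.
Qed.

Lemma sum_mxvec m n (F : 'I_(m * n) -> C) :
  \sum_(k < m * n) F k = \sum_(i < m) \sum_(j < n) F (mxvec_index i j).
Proof.
rewrite pair_bigA /= (reindex (uncurry (@mxvec_index m n))) /=.
  by apply: eq_bigr => -[i j].
have [g g1 g2] := curry_mxvec_bij m n.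
by exists g => x _; [apply: g1 | apply: g2].
Qed.

Lemma mx_mxvec_eq m1 m2 n1 n2 (A B : 'M[C]_(m1 * m2, n1 * n2)) :
  (forall i1 i2 j1 j2, A (mxvec_index i1 i2) (mxvec_index j1 j2)
                     = B (mxvec_index i1 i2) (mxvec_index j1 j2)) -> A = B.
Proof.
move=> H; apply/matrixP => k l.
by case/mxvec_indexP: k => i1 i2; case/mxvec_indexP: l => j1 j2.
Qed.

Lemma kronE m1 n1 m2 n2 (A : 'M[C]_(m1, n1)) (B : 'M[C]_(m2, n2)) i1 i2 j1 j2 :
  kron A B (mxvec_index i1 i2) (mxvec_index j1 j2) = A i1 j1 * B i2 j2.
Proof.
have only (n : nat) (k0 : 'I_n) (F : 'I_n -> C) :
    (forall k, k != k0 -> F k = 0) -> \sum_k F k = F k0.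
  by move=> H; rewrite (bigD1 k0) //= big1 ?addr0.
rewrite /kron summxE (only _ i1) => [|k1 nk1].
  rewrite summxE (only _ j1) => [|k2 nk2].
    rewrite summxE (only _ i2) => [|k3 nk3].
      rewrite summxE (only _ j2) => [|k4 nk4].
        by rewrite !mxE !eqxx /= mulr1.
      by rewrite !mxE !mxvec_index_eq eq_sym (negbTE nk4) !andbF mulr0.
    rewrite summxE big1 // => k4 _.
    by rewrite !mxE !mxvec_index_eq eq_sym (negbTE nk3) !andbF mulr0.
  rewrite summxE big1 // => k3 _; rewrite summxE big1 // => k4 _.
  by rewrite !mxE !mxvec_index_eq [_ == k2]eq_sym (negbTE nk2) !andbF mulr0.
rewrite summxE big1 // => k2 _; rewrite summxE big1 // => k3 _.
rewrite summxE big1 // => k4 _.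
by rewrite !mxE !mxvec_index_eq [_ == k1]eq_sym (negbTE nk1) mulr0.
Qed.

Lemma kron_mul m1 n1 p1 m2 n2 p2 (A : 'M[C]_(m1, n1)) (B : 'M[C]_(m2, n2))
  (A' : 'M[C]_(n1, p1)) (B' : 'M[C]_(n2, p2)) :
  kron A B *m kron A' B' = kron (A *m A') (B *m B').
Proof.
apply: mx_mxvec_eq => i1 i2 j1 j2.
rewrite mxE sum_mxvec kronE !mxE big_distrlr /=.
apply: eq_bigr => k1 _; apply: eq_bigr => k2 _.
by rewrite !kronE mulrACA.
Qed.

Lemma kron_adj m1 n1 m2 n2 (A : 'M[C]_(m1, n1)) (B : 'M[C]_(m2, n2)) :
  adj (kron A B) = kron (adj A) (adj B).
Proof. by apply: mx_mxvec_eq => i1 i2 j1 j2; rewrite dagE !kronE !dagE rmorphM. Qed.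

Lemma kronDl m1 n1 m2 n2 (A A' : 'M[C]_(m1, n1)) (B : 'M[C]_(m2, n2)) :
  kron (A + A') B = kron A B + kron A' B.
Proof. by apply: mx_mxvec_eq => i1 i2 j1 j2; rewrite mxE !kronE mxE mulrDl. Qed.

Lemma kronDr m1 n1 m2 n2 (A : 'M[C]_(m1, n1)) (B B' : 'M[C]_(m2, n2)) :
  kron A (B + B') = kron A B + kron A B'.
Proof. by apply: mx_mxvec_eq => i1 i2 j1 j2; rewrite mxE !kronE mxE mulrDr. Qed.

Lemma kronZl m1 n1 m2 n2 c (A : 'M[C]_(m1, n1)) (B : 'M[C]_(m2, n2)) :
  kron (c *: A) B = c *: kron A B.
Proof. by apply: mx_mxvec_eq => i1 i2 j1 j2; rewrite mxE !kronE mxE mulrA. Qed.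

Lemma kronZr m1 n1 m2 n2 c (A : 'M[C]_(m1, n1)) (B : 'M[C]_(m2, n2)) :
  kron A (c *: B) = c *: kron A B.
Proof. by apply: mx_mxvec_eq => i1 i2 j1 j2; rewrite mxE !kronE mxE mulrCA. Qed.

Lemma kron0l m1 n1 m2 n2 (B : 'M[C]_(m2, n2)) : kron (0 : 'M[C]_(m1, n1)) B = 0.
Proof. by rewrite -(scale0r 0) kronZl scale0r. Qed.

Lemma kron0r m1 n1 m2 n2 (A : 'M[C]_(m1, n1)) : kron A (0 : 'M[C]_(m2, n2)) = 0.
Proof. by rewrite -(scale0r 0) kronZr scale0r. Qed.

Lemma kronBl m1 n1 m2 n2 (A A' : 'M[C]_(m1, n1)) (B : 'M[C]_(m2, n2)) :
  kron (A - A') B = kron A B - kron A' B.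
Proof. by rewrite kronDl -scaleN1r kronZl scaleN1r. Qed.

Lemma kronBr m1 n1 m2 n2 (A : 'M[C]_(m1, n1)) (B B' : 'M[C]_(m2, n2)) :
  kron A (B - B') = kron A B - kron A B'.
Proof. by rewrite kronDr -scaleN1r kronZr scaleN1r. Qed.

Lemma kron_suml m1 n1 m2 n2 I (r : seq I) (P : pred I)
  (F : I -> 'M[C]_(m1, n1)) (B : 'M[C]_(m2, n2)) :
  kron (\sum_(i <- r | P i) F i) B = \sum_(i <- r | P i) kron (F i) B.
Proof. by apply: (big_morph (fun A => kron A B)) => [A A'|]; rewrite ?kronDl ?kron0l. Qed.

Lemma kron_sumr m1 n1 m2 n2 I (r : seq I) (P : pred I)
  (A : 'M[C]_(m1, n1)) (F : I -> 'M[C]_(m2, n2)) :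
  kron A (\sum_(i <- r | P i) F i) = \sum_(i <- r | P i) kron A (F i).
Proof. by apply: (big_morph (fun B => kron A B)) => [B B'|]; rewrite ?kronDr ?kron0r. Qed.

Lemma kron11 m n : kron (1%:M : 'M[C]_m) (1%:M : 'M[C]_n) = 1%:M.
Proof.
apply: mx_mxvec_eq => i1 i2 j1 j2.
rewrite kronE !mxE mxvec_index_eq.
by case: (i1 == j1); case: (i2 == j2); rewrite /= ?mulr1 ?mulr0 ?mul0r.
Qed.

Lemma mxtrace_kron m n (A : 'M[C]_m) (B : 'M[C]_n) :
  \tr (kron A B) = \tr A * \tr B.
Proof.
rewrite /mxtrace sum_mxvec big_distrlr /=.
by apply: eq_bigr => i _; apply: eq_bigr => j _; rewrite kronE.
Qed.

Lemma mx_neq0_entry m n (E : 'M[C]_(m, n)) : E != 0 -> exists i j, E i j != 0.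
Proof.
move=> E0; have [/existsP [i /existsP [j Eij]]|/existsPn hE] :=
  boolP [exists i, exists j, E i j != 0]; first by exists i, j.
case/eqP: E0; apply/matrixP => i j; rewrite mxE.
by move/existsPn/(_ j)/negbNE/eqP: (hE i).
Qed.

Lemma kron_eq0l m1 n1 m2 n2 (E : 'M[C]_(m1, n1)) (X : 'M[C]_(m2, n2)) :
  E != 0 -> kron E X = 0 -> X = 0.
Proof.
move=> /mx_neq0_entry [i [j Eij]] hk.
apply/matrixP => k l; move/matrixP: hk => /(_ (mxvec_index i k) (mxvec_index j l)).
by rewrite kronE !mxE => /eqP; rewrite mulf_eq0 (negbTE Eij) => /eqP.
Qed.

Lemma kron_eq0r m1 n1 m2 n2 (E : 'M[C]_(m1, n1)) (X : 'M[C]_(m2, n2)) :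
  E != 0 -> kron X E = 0 -> X = 0.
Proof.
move=> /mx_neq0_entry [i [j Eij]] hk.
apply/matrixP => k l; move/matrixP: hk => /(_ (mxvec_index k i) (mxvec_index l j)).
by rewrite kronE !mxE => /eqP; rewrite mulf_eq0 (negbTE Eij) orbF => /eqP.
Qed.

End Kronecker.

Section InnerProduct.
Variable C : numClosedFieldType.

Definition dot n (u v : 'cV[C]_n) : C := (adj u *m v) 0 0.
Definition form n (A : 'M[C]_n) (u v : 'cV[C]_n) : C := (adj u *m A *m v) 0 0.

Lemma dotE n (u v : 'cV[C]_n) : dot u v = \sum_i (u i 0)^* * v i 0.
Proof. by rewrite /dot mxE; apply: eq_bigr => i _; rewrite dagE. Qed.

Lemma dot_ge0 n (u : 'cV[C]_n) : 0 <= dot u u.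
Proof. by rewrite dotE sumr_ge0 // => i _; rewrite mulrC mul_conjC_ge0. Qed.

Lemma dot_eq0 n (u : 'cV[C]_n) : dot u u = 0 -> u = 0.
Proof.
rewrite dotE => h; apply/matrixP => i j; rewrite (ord1 j) mxE.
have pos k : predT k -> 0 <= (u k 0)^* * u k 0 by rewrite mulrC mul_conjC_ge0.
by move/eqP: (psumr_eq0P pos h (isT : predT i)); rewrite mulrC mul_conjC_eq0 => /eqP.
Qed.

Lemma dot_neq0 n (u : 'cV[C]_n) : u != 0 -> dot u u != 0.
Proof. by apply: contra => /eqP /dot_eq0 /eqP. Qed.

Lemma dotC n (u v : 'cV[C]_n) : dot v u = (dot u v)^*.
Proof. by rewrite /dot -dagE dagM dagK. Qed.

Lemma dotC0 n (u v : 'cV[C]_n) : dot u v = 0 -> dot v u = 0.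
Proof. by move=> h; rewrite dotC h rmorph0. Qed.

Lemma dotZr n (u v : 'cV[C]_n) c : dot u (c *: v) = c * dot u v.
Proof. by rewrite /dot -scalemxAr mxE. Qed.

Lemma dot0r n (u : 'cV[C]_n) : dot u 0 = 0.
Proof. by rewrite /dot mulmx0 mxE. Qed.

Lemma formC n (A : 'M[C]_n) u v : adj A = A -> form A v u = (form A u v)^*.
Proof. by move=> hA; rewrite /form -dagE !dagM hA dagK mulmxA. Qed.

Lemma form_expand n (A : 'M[C]_n) u v c :
  form A (u - c *: v) (u - c *: v) =
  form A u u - c * form A u v - c^* * form A v u + c * c^* * form A v v.
Proof.
rewrite /form dagB dagZ !mulmxBl !mulmxBr -!scalemxAl -!scalemxAr !mxE; ring.
Qed.

Lemma form_delta n (A : 'M[C]_n) v i : form A (delta_mx i 0) v = (A *m v) i 0.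
Proof.
rewrite /form -mulmxA mxE (bigD1 i) //= big1 ?addr0.
  by rewrite dagE mxE !eqxx /= rmorph1 mul1r.
by move=> k nk; rewrite dagE mxE (negbTE nk) /= rmorph0 mul0r.
Qed.

(* An isotropic vector of a positive semidefinite form lies in its kernel:
   otherwise <w, A v> != 0 for some w and a small perturbation of v in the
   direction of w would make the form negative. *)
Lemma psd_kernel n (A : 'M[C]_n) v : psd A -> form A v v = 0 -> A *m v = 0.
Proof.
move=> [hA hpos] h0.
suff hz w : form A w v = 0.
  by apply/matrixP => i j; rewrite (ord1 j) -form_delta hz mxE.
set z := form A w v; set a := form A w w.
have ha : 0 <= a by apply: hpos.
set s := (1 + a)^-1.
have h1a : 0 < 1 + a by rewrite ltr_wpDr.
have hs : 0 < s by rewrite invr_gt0.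
have hsc : s^* = s by rewrite geC0_conj // ltW.
have hsa : s * a <= 1 by rewrite mulrC ler_pdivrMr // mul1r lerDr.
have h2 : 0 < 2 - s * a by rewrite subr_gt0 (le_lt_trans hsa) // ltr1n.
have := hpos (v - (s * z) *: w).
rewrite -/(form A _ _) form_expand h0 (formC _ _ hA) -/z -/a.
have -> : 0 - s * z * z^* - (s * z)^* * z + s * z * (s * z)^* * a =
          - (s * (z * z^*)) * (2 - s * a) by rewrite !rmorphM /= hsc; ring.
rewrite mulNr oppr_ge0 pmulr_lle0 // pmulr_rle0 // => hle.
have : z * z^* = 0 by apply/eqP; rewrite eq_le hle mul_conjC_ge0.
by move/eqP; rewrite mul_conjC_eq0 => /eqP.
Qed.

Lemma ketbraZ n c (a : 'cV[C]_n) : ketbra (c *: a) = (c * c^*) *: ketbra a.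
Proof. by rewrite /ketbra dagZ -scalemxAl -scalemxAr scalerA. Qed.

Lemma ketbra0 n : ketbra (0 : 'cV[C]_n) = 0.
Proof. by rewrite /ketbra mul0mx. Qed.

Lemma dag_ketbra n (a : 'cV[C]_n) : adj (ketbra a) = ketbra a.
Proof. by rewrite /ketbra dagM dagK. Qed.

Lemma ketbra_mul n (u v : 'cV[C]_n) :
  ketbra u *m ketbra v = dot u v *: (u *m adj v).
Proof.
rewrite /ketbra -mulmxA (mulmxA (adj u)) [adj u *m v]mx11_scalar.
by rewrite mul_scalar_mx -scalemxAr.
Qed.

Lemma ketbra_conj m n (K : 'M[C]_(m, n)) (a : 'cV[C]_m) :
  adj K *m ketbra a *m K = ketbra (adj K *m a).
Proof. by rewrite /ketbra dagM dagK !mulmxA. Qed.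

Lemma mxtrace_sum n I (r : seq I) (P : pred I) (F : I -> 'M[C]_n) :
  \tr (\sum_(i <- r | P i) F i) = \sum_(i <- r | P i) \tr (F i).
Proof. exact: (big_morph _ (@mxtraceD C n) (mxtrace0 C n)). Qed.

Lemma mxtrace_ketbra n (u : 'cV[C]_n) (A : 'M[C]_n) :
  \tr (ketbra u *m A) = form A u u.
Proof. by rewrite /ketbra -mulmxA mxtrace_mulC trace_mx11. Qed.

Lemma mxtrace_ketbra_mul n (u v : 'cV[C]_n) :
  \tr (ketbra u *m ketbra v) = dot u v * (dot u v)^*.
Proof. by rewrite ketbra_mul mxtraceZ mxtrace_mulC trace_mx11 -dotC. Qed.

Lemma one_ketbra n : (1%:M : 'M[C]_n) = \sum_(i < n) ketbra (delta_mx i 0).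
Proof.
apply/matrixP => i j; rewrite summxE (bigD1 i) //= big1 ?addr0.
  rewrite /ketbra [RHS]mxE big_ord1 dagE !mxE !eqxx eq_sym.
  by case: (j == i); rewrite /= ?rmorph1 ?rmorph0 ?mulr1 ?mulr0 ?mul1r.
move=> k nk; rewrite /ketbra mxE big_ord1 dagE !mxE.
by rewrite eq_sym (negbTE nk) mul0r.
Qed.

Definition proj n (E : 'M[C]_n) := adj E = E /\ E *m E = E.

Lemma proj_compl n (E : 'M[C]_n) : proj E -> proj (1%:M - E).
Proof.
move=> [h1 h2]; split; first by rewrite dagB dag1 h1.
by rewrite mulmxBl !mulmxBr !mul1mx ?mulmx1 h2 subrr subr0.
Qed.

Lemma proj0 n : proj (0 : 'M[C]_n).
Proof. by split; [rewrite dag0 | rewrite mulmx0]. Qed.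

Lemma proj1 n : proj (1%:M : 'M[C]_n).
Proof. by split; [rewrite dag1 | rewrite mulmx1]. Qed.

End InnerProduct.

Section ProductSums.
Variable C : numClosedFieldType.

(* The unnormalised product projector |a><a| (x) |b><b|, and the operators
   that are finite sums of such: these are exactly the separable operators
   (the weights being absorbed into the vectors). *)
Definition prod_ket m n (x : 'cV[C]_m * 'cV[C]_n) : 'M[C]_(m * n) :=
  kron (ketbra x.1) (ketbra x.2).

Definition prod_sum m n (P : 'M[C]_(m * n)) : Prop :=
  exists s : seq ('cV[C]_m * 'cV[C]_n), P = \sum_(x <- s) prod_ket x.

Lemma prod_sum_big m n I (r : seq I) (P : pred I) (F : I -> 'M[C]_(m * n)) :
  (forall i, P i -> prod_sum (F i)) -> prod_sum (\sum_(i <- r | P i) F i).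
Proof.
move=> hF; apply: big_ind => //; first by exists [::]; rewrite big_nil.
by move=> _ _ [s1 ->] [s2 ->]; exists (s1 ++ s2); rewrite big_cat.
Qed.

Lemma prod_sum_ket m n (a : 'cV[C]_m) (b : 'cV[C]_n) :
  prod_sum (kron (ketbra a) (ketbra b)).
Proof. by exists [:: (a, b)]; rewrite big_seq1. Qed.

Lemma prod_sum_one m n : prod_sum (1%:M : 'M[C]_(m * n)).
Proof.
rewrite -kron11 (one_ketbra C m) kron_suml; apply: prod_sum_big => i _.
by rewrite (one_ketbra C n) kron_sumr; apply: prod_sum_big => j _; apply: prod_sum_ket.
Qed.

Lemma prod_sum_conj m1 m2 n1 n2 (K : 'M[C]_(m1, m2)) (L : 'M[C]_(n1, n2))
  (E : 'M[C]_(m1 * n1)) :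
  prod_sum E -> prod_sum (adj (kron K L) *m E *m kron K L).
Proof.
move=> [s ->]; rewrite (mulmx_sumr (adj (kron K L))) mulmx_suml.
apply: prod_sum_big => x _.
by rewrite /prod_ket kron_adj !kron_mul !ketbra_conj; apply: prod_sum_ket.
Qed.

(* Normalisation of a qubit vector (the zero vector is sent to e_0). *)
Definition normalize (a : 'cV[C]_2) : 'cV[C]_2 :=
  if a == 0 then delta_mx 0 0 else (sqrtC (dot a a))^-1 *: a.

Lemma normalize_unit (a : 'cV[C]_2) : unit_vec (normalize a).
Proof.
rewrite /unit_vec /normalize; case: eqP => [_|/eqP a0].
  apply/matrixP => i j; rewrite (ord1 i) (ord1 j) !mxE (bigD1 0) //= big1.
    by rewrite dagE !mxE /= rmorph1 mulr1 addr0.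
  by move=> k nk; rewrite dagE !mxE (negbTE nk) /= rmorph0 mul0r.
rewrite dagZ -scalemxAl -scalemxAr scalerA [adj a *m a]mx11_scalar -/(dot a a).
have r0 : sqrtC (dot a a) != 0 by rewrite sqrtC_eq0 dot_neq0.
rewrite geC0_conj ?invr_ge0 ?sqrtC_ge0 ?dot_ge0 // -{3}(sqrtCK (dot a a)).
by rewrite scale_scalar_mx; congr (_%:M); field.
Qed.

Lemma ketbra_normalize (a : 'cV[C]_2) :
  ketbra a = dot a a *: ketbra (normalize a).
Proof.
rewrite /normalize; case: eqP => [->|/eqP a0]; first by rewrite ketbra0 dot0r scale0r.
have r0 : sqrtC (dot a a) != 0 by rewrite sqrtC_eq0 dot_neq0.
rewrite ketbraZ scalerA geC0_conj ?invr_ge0 ?sqrtC_ge0 ?dot_ge0 //.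
rewrite -{1}(sqrtCK (dot a a)); set r := sqrtC _.
have -> : r ^+ 2 * (r^-1 * r^-1) = 1 by field.
by rewrite scale1r.
Qed.

Lemma separable_prod_sum (P : 'M[C]_(2 * 2)) : separable P <-> prod_sum P.
Proof.
split=> [[k [c [a [b [hc [_ [_ ->]]]]]]]|[s ->]].
  exists [seq (sqrtC (c i) *: a i, b i) | i <- enum 'I_k].
  rewrite big_map big_enum /=; apply: eq_bigr => i _.
  rewrite /prod_ket ketbraZ kronZl geC0_conj ?sqrtC_ge0 //.
  by rewrite -expr2 sqrtCK.
pose x0 := (0 : 'cV[C]_2, 0 : 'cV[C]_2).
pose x i := nth x0 s i.
exists (size s), (fun i => dot (x i).1 (x i).1 * dot (x i).2 (x i).2),
  (fun i => normalize (x i).1), (fun i => normalize (x i).2).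
split; first by move=> i; rewrite mulr_ge0 ?dot_ge0.
split; first by move=> i; apply: normalize_unit.
split; first by move=> i; apply: normalize_unit.
rewrite (big_nth x0) big_mkord; apply: eq_bigr => i _.
by rewrite /prod_ket {1}ketbra_normalize {1}(ketbra_normalize (x i).2) kronZl kronZr scalerA.
Qed.

End ProductSums.

Section LOCCEffects.
Variable C : numClosedFieldType.

Lemma kron_adj_mul m1 m2 n1 n2 (K : 'M[C]_(m1, m2)) (L : 'M[C]_(n1, n2)) :
  adj (kron K L) *m kron K L = kron (adj K *m K) (adj L *m L).
Proof. by rewrite kron_adj kron_mul. Qed.

Lemma LOCC_effect_sum da db (p : LOCC C da db) :
  LOCC_wf p -> LOCC_effect false p + LOCC_effect true p = 1%:M.
Proof.
elim: p => {da db} [da db o|da db k d K next IH|da db k d K next IH] /=.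
- by case: o => _; rewrite /= ?addr0 ?add0r.
- move=> [hw hn]; rewrite -big_split /=.
  under eq_bigr => j _ do rewrite -mulmxDl -mulmxDr IH // mulmx1 kron_adj_mul.
  by rewrite -kron_suml hw dag1 mulmx1 kron11.
- move=> [hw hn]; rewrite -big_split /=.
  under eq_bigr => j _ do rewrite -mulmxDl -mulmxDr IH // mulmx1 kron_adj_mul.
  by rewrite -kron_sumr hw dag1 mulmx1 kron11.
Qed.

(* Every LOCC effect is separable: it arises from 1 or 0 by local conjugations
   and sums. *)
Lemma LOCC_effect_prod_sum o da db (p : LOCC C da db) : prod_sum (LOCC_effect o p).
Proof.
elim: p => {da db} [da db o'|da db k d K next IH|da db k d K next IH] /=.
- case: eqP => _; first exact: prod_sum_one.
  by exists [::]; rewrite big_nil.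
- by apply: prod_sum_big => j _; apply: prod_sum_conj.
- by apply: prod_sum_big => j _; apply: prod_sum_conj.
Qed.

End LOCCEffects.

Section SupportProjectors.
Variable C : numClosedFieldType.

Lemma supp_proj_proj n (P rho : 'M[C]_n) : supp_proj P rho -> proj P.
Proof. by case=> [hP [hPP _]]. Qed.

Lemma supp_proj_range n (P rho : 'M[C]_n) : supp_proj P rho ->
  (exists X, P = rho *m X) /\ (exists Y, rho = P *m Y).
Proof.
have col (A B : 'M[C]_n) : (A^T <= B^T)%MS -> exists X, A = B *m X.
  move=> /mulmxKpV h; exists (A^T *m pinvmx B^T)^T.
  by rewrite -{1}[B]trmxK -trmx_mul h trmxK.
by move=> [_ [_ /andP [h1 h2]]]; split; apply: col.
Qed.

Lemma supp_proj_fix n (P rho : 'M[C]_n) : supp_proj P rho -> P *m rho = rho.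
Proof.
move=> hP; have [_ [Y ->]] := supp_proj_range hP.
by rewrite mulmxA (supp_proj_proj hP).2.
Qed.

Lemma supp_proj_left n (P rho : 'M[C]_n) : supp_proj P rho -> adj rho = rho ->
  exists X, P = X *m rho.
Proof.
move=> hP hr; have [[X hX] _] := supp_proj_range hP.
by exists (adj X); rewrite -(supp_proj_proj hP).1 hX dagM hr.
Qed.

Lemma supp_proj_orth n (P1 P2 rho1 rho2 : 'M[C]_n) :
  supp_proj P1 rho1 -> supp_proj P2 rho2 -> orth_supports rho1 rho2 ->
  P1 *m P2 = 0.
Proof.
move=> h1 h2 ho; have [[X1 e1] _] := supp_proj_range h1.
have [[X2 e2] _] := supp_proj_range h2.
rewrite -(supp_proj_proj h1).1 e1 e2 dagM -mulmxA (mulmxA (adj rho1)) ho.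
by rewrite mul0mx mulmx0.
Qed.

Lemma supp_proj_rank n (P rho : 'M[C]_n) : supp_proj P rho -> \rank P = \rank rho.
Proof. by move=> [_ [_ h]]; rewrite -mxrank_tr (eqmx_rank h) mxrank_tr. Qed.

(* Two mutually orthogonal projectors whose ranks add up to the dimension
   resolve the identity: their sum is an idempotent of full rank. *)
Lemma proj_complete n (P1 P2 : 'M[C]_n) :
  proj P1 -> proj P2 -> P1 *m P2 = 0 -> (\rank P1 + \rank P2 = n)%N ->
  P1 + P2 = 1%:M.
Proof.
move=> [a1 i1] [a2 i2] o12 hr.
have o21 : P2 *m P1 = 0 by rewrite -a1 -a2 -dagM o12 dag0.
set Q := P1 + P2.
have QQ : Q *m Q = Q by rewrite /Q mulmxDl !mulmxDr o12 o21 i1 i2 addr0 add0r.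
have cap : (P1^T :&: P2^T)%MS = 0.
  set W := (P1^T :&: P2^T)%MS.
  have /mulmxKpV w1 : (W <= P1^T)%MS by apply: capmxSl.
  have /mulmxKpV w2 : (W <= P2^T)%MS by apply: capmxSr.
  have e1 : W *m P1^T = W by rewrite -{1}w1 -mulmxA -trmx_mul i1 w1.
  by rewrite -e1 -w2 -mulmxA -trmx_mul o12 trmx0 mulmx0.
have sub : (P1^T + P2^T <= Q^T)%MS.
  have QP1 : Q *m P1 = P1 by rewrite /Q mulmxDl o21 i1 addr0.
  have QP2 : Q *m P2 = P2 by rewrite /Q mulmxDl o12 i2 add0r.
  by rewrite addsmx_sub -{1}QP1 -{1}QP2 !trmx_mul !submxMl.
have : row_full Q^T.
  rewrite /row_full eqn_leq rank_leq_col /= -{1}hr.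
  by rewrite -(mxrank_tr P1) -(mxrank_tr P2) -(mxrank_disjoint_sum cap) mxrankS.
rewrite row_full_unit unitmx_tr => hu.
by rewrite -[Q](mulKmx hu) QQ mulVmx.
Qed.

Lemma supp_proj_complementary n (rho1 rho2 P1 P2 : 'M[C]_n) :
  (\rank rho1 + \rank rho2 = n)%N -> orth_supports rho1 rho2 ->
  supp_proj P1 rho1 -> supp_proj P2 rho2 -> P1 + P2 = 1%:M.
Proof.
move=> hr ho h1 h2; apply: proj_complete; rewrite ?(supp_proj_orth h1 h2) //.
- exact: supp_proj_proj h1.
- exact: supp_proj_proj h2.
- by rewrite (supp_proj_rank h1) (supp_proj_rank h2).
Qed.

(* Every hermitian matrix has a support projector: diagonalise it unitarily,
   rho = U^+ D U, and take U^+ D' U with D' the indicator of the nonzero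
   eigenvalues. *)
Lemma supp_proj_exists n (rho : 'M[C]_n) : adj rho = rho -> exists P, supp_proj P rho.
Proof.
move=> hr.
have : rho \is normalmx by apply/normalmxP; rewrite -dag_conj_tr hr.
move/orthomx_spectralP; set U := spectralmx rho; set d := spectral_diag rho.
have hU : U *m adj U = 1%:M.
  by rewrite dag_conj_tr; apply/unitarymxP/spectral_unitarymx.
have -> : invmx U = adj U.
  by rewrite dag_conj_tr invmx_unitary // spectral_unitarymx.
move=> hrho.
pose dP := diag_mx (\row_i ((d 0 i != 0)%:R) : 'rV[C]_n).
pose dV := diag_mx (\row_i ((d 0 i)^-1) : 'rV[C]_n).
have dPd : dP *m diag_mx d = diag_mx d.
  rewrite mulmx_diag; congr diag_mx; apply/rowP => i; rewrite !mxE.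
  by case: eqP => [->|_]; rewrite ?mulr0 ?mul1r.
have ddV : diag_mx d *m dV = dP.
  rewrite mulmx_diag; congr diag_mx; apply/rowP => i; rewrite !mxE.
  by case: eqP => [->|/eqP h]; rewrite ?mul0r ?divff.
have dPP : dP *m dP = dP.
  rewrite mulmx_diag; congr diag_mx; apply/rowP => i; rewrite !mxE.
  by case: (_ != _); rewrite ?mulr0 ?mulr1.
have dPh : adj dP = dP.
  apply/matrixP => i j; rewrite dagE !mxE; case: (eqVneq i j) => [->|nij].
    by rewrite !mulr1n; case: (_ != _); rewrite ?rmorph1 ?rmorph0.
  by rewrite !mulr0n rmorph0.
have conjU (A B : 'M[C]_n) : adj U *m A *m U *m (adj U *m B *m U) = adj U *m (A *m B) *m U.
  by rewrite -!mulmxA (mulmxA U) hU mul1mx !mulmxA.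
exists (adj U *m dP *m U); split; [|split].
- by rewrite !dagM dagK dPh mulmxA.
- by rewrite conjU dPP.
- apply/andP; split; apply/submxP.
  + by exists (adj U *m dV *m U)^T; rewrite -trmx_mul hrho conjU ddV.
  + by exists rho^T; rewrite -trmx_mul {2}hrho conjU dPd -hrho.
Qed.

End SupportProjectors.

Section Distinguishing.
Variable C : numClosedFieldType.

Lemma prod_ket_ketbra m n (x : 'cV[C]_m * 'cV[C]_n) :
  prod_ket x = ketbra (kron x.1 x.2 : 'cV[C]_(m * n)).
Proof. by rewrite /prod_ket /ketbra -kron_mul -kron_adj. Qed.

(* A product sum that has zero weight against a PSD operator rho is
   annihilated by rho: every term contributes a nonnegative amount. *)
Lemma prod_sum_kernel m n (rho P : 'M[C]_(m * n)) : psd rho -> prod_sum P ->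
  \tr (P *m rho) = 0 -> rho *m P = 0.
Proof.
move=> hr [s ->]; rewrite mulmx_suml mxtrace_sum => /eqP.
under eq_bigr => x _ do rewrite prod_ket_ketbra mxtrace_ketbra.
rewrite psumr_eq0 => [/allP h0|x _]; last exact: hr.2.
rewrite mulmx_sumr big1_seq // => x /h0 /eqP hx.
by rewrite prod_ket_ketbra /ketbra mulmxA (psd_kernel hr hx) mul0mx.
Qed.

Lemma sep_povm_supp (rho1 rho2 Pi1 Pi2 P1 P2 : 'M[C]_(2 * 2)) :
  psd rho1 -> psd rho2 -> separable_POVM Pi1 Pi2 ->
  perfectly_distinguishes Pi1 Pi2 rho1 rho2 ->
  supp_proj P1 rho1 -> supp_proj P2 rho2 -> P1 + P2 = 1%:M ->
  Pi1 = P1 /\ Pi2 = P2.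
Proof.
move=> d1 d2 [/separable_prod_sum s1 [/separable_prod_sum s2 hs]] [_ [t12 [t21 _]]].
move=> h1 h2 hsum.
have [X1 e1] := supp_proj_left h1 d1.1.
have [X2 e2] := supp_proj_left h2 d2.1.
have z1 : P1 *m Pi2 = 0 by rewrite e1 -mulmxA (prod_sum_kernel d1 s2 t21) mulmx0.
have z2 : P2 *m Pi1 = 0 by rewrite e2 -mulmxA (prod_sum_kernel d2 s1 t12) mulmx0.
have ePi2 : Pi2 = 1%:M - Pi1 by rewrite -hs addrC addKr.
have eP2 : P2 = 1%:M - P1 by rewrite -hsum addrC addKr.
have eq1 : Pi1 = P1.
  rewrite -[Pi1]mul1mx -hsum mulmxDl z2 addr0.
  by move/eqP: z1; rewrite ePi2 mulmxBr mulmx1 subr_eq0 => /eqP.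
by rewrite ePi2 eP2 eq1.
Qed.

Lemma supp_distinguishes n (rho1 rho2 P1 P2 : 'M[C]_n) :
  density rho1 -> density rho2 ->
  supp_proj P1 rho1 -> supp_proj P2 rho2 -> P1 + P2 = 1%:M ->
  perfectly_distinguishes P1 P2 rho1 rho2.
Proof.
move=> [_ t1] [_ t2] h1 h2 hsum.
have [_ i1] := supp_proj_proj h1.
have e2 : P2 = 1%:M - P1 by rewrite -hsum addrC addKr.
have o12 : P1 *m P2 = 0 by rewrite e2 mulmxBr mulmx1 i1 subrr.
have o21 : P2 *m P1 = 0 by rewrite e2 mulmxBl mul1mx i1 subrr.
have [f1 f2] := (supp_proj_fix h1, supp_proj_fix h2).
split; first by rewrite f1.
split; first by rewrite -f2 mulmxA o12 mul0mx mxtrace0.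
split; first by rewrite -f1 mulmxA o21 mul0mx mxtrace0.
by rewrite f2.
Qed.

End Distinguishing.

Section QubitGeometry.
Variable C : numClosedFieldType.
Implicit Types a u v w x : 'cV[C]_2.

(* The vector orthogonal to a in C^2 obtained by "rotating" its conjugate;
   <perp a, v> is the determinant of (a, v). *)
Definition perp a : 'cV[C]_2 :=
  (- (a 1 0)^*) *: delta_mx 0 0 + (a 0 0)^* *: delta_mx 1 0.

Lemma perp0 a : perp a 0 0 = - (a 1 0)^*.
Proof. by rewrite !mxE /= mulr1 mulr0 addr0. Qed.

Lemma perp1 a : perp a 1 0 = (a 0 0)^*.
Proof. by rewrite !mxE /= mulr1 mulr0 add0r. Qed.

Lemma dot2 u v : dot u v = (u 0 0)^* * v 0 0 + (u 1 0)^* * v 1 0.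
Proof.
rewrite dotE big_ord_recl big_ord1.
by have -> : lift ord0 ord0 = 1 :> 'I_2 by apply: val_inj.
Qed.

Lemma col2_eq u v : u 0 0 = v 0 0 -> u 1 0 = v 1 0 -> u = v.
Proof.
move=> h0 h1; apply/matrixP => i j; rewrite (ord1 j).
by case: i => [[|[|//]]] hi; [move: h0 | move: h1]; congr (_ = _); congr (_ _ _);
  apply: val_inj.
Qed.

Lemma mat2_eq (A B : 'M[C]_2) : A 0 0 = B 0 0 -> A 0 1 = B 0 1 ->
  A 1 0 = B 1 0 -> A 1 1 = B 1 1 -> A = B.
Proof.
move=> h00 h01 h10 h11; apply/matrixP => i j.
have e0 (hk : (0 < 2)%N) : Ordinal hk = 0 by apply: val_inj.
have e1 (hk : (1 < 2)%N) : Ordinal hk = 1 by apply: val_inj.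
by case: i => [[|[|//]]] hi; case: j => [[|[|//]]] hj; rewrite ?e0 ?e1.
Qed.

Lemma dot_perp a v : dot (perp a) v = a 0 0 * v 1 0 - a 1 0 * v 0 0.
Proof. by rewrite dot2 perp0 perp1 rmorphN /= !conjCK; ring. Qed.

Lemma perp_decomp a v : dot a a *: v = dot a v *: a + dot (perp a) v *: perp a.
Proof.
rewrite dot_perp !dot2; apply: col2_eq; rewrite !mxE ?perp0 ?perp1 /=; ring.
Qed.

Lemma ketbra_perp_sum a : ketbra a + ketbra (perp a) = dot a a *: 1%:M.
Proof.
rewrite dot2; apply: mat2_eq;
  rewrite /ketbra !mxE !big_ord1 !dagE ?perp0 ?perp1 /= ?rmorphN /= ?conjCK; ring.
Qed.

Lemma orth_common x v w : x != 0 -> dot x v = 0 -> dot x w = 0 ->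
  dot (perp v) w = 0.
Proof.
move=> x0; rewrite dot_perp !dot2 => h1 h2.
have [h|h] := eqVneq (x 0 0) 0.
- have x1 : x 1 0 != 0.
    by apply: contra x0 => /eqP e; apply/eqP/col2_eq; rewrite ?h ?e mxE.
  rewrite h rmorph0 !mul0r !add0r in h1 h2.
  have : (x 1 0)^* * (v 0 0 * w 1 0 - v 1 0 * w 0 0) = 0.
    transitivity (v 0 0 * ((x 1 0)^* * w 1 0) - w 0 0 * ((x 1 0)^* * v 1 0)).
      by ring.
    by rewrite h1 h2 !mulr0 subrr.
  by move/eqP; rewrite mulf_eq0 conjC_eq0 (negbTE x1) => /eqP.
- have : (x 0 0)^* * (v 0 0 * w 1 0 - v 1 0 * w 0 0) = 0.
    transitivity (w 1 0 * ((x 0 0)^* * v 0 0 + (x 1 0)^* * v 1 0)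
                  - v 1 0 * ((x 0 0)^* * w 0 0 + (x 1 0)^* * w 1 0)); first by ring.
    by rewrite h1 h2 !mulr0 subrr.
  by move/eqP; rewrite mulf_eq0 conjC_eq0 (negbTE h) => /eqP.
Qed.

Lemma ketbra_scale_inv n (v w : 'cV[C]_n) (c d : C) :
  c != 0 -> ketbra (c *: v) = ketbra (d *: w) -> exists k, ketbra v = k *: ketbra w.
Proof.
move=> c0; rewrite !ketbraZ => h.
have cc : c * c^* != 0 by rewrite mulf_neq0 ?conjC_eq0.
exists ((c * c^*)^-1 * (d * d^*)).
by rewrite -scalerA -h scalerA mulVf // scale1r.
Qed.

Lemma ketbra_parallel a v : a != 0 -> dot (perp a) v = 0 ->
  exists c, ketbra v = c *: ketbra a.
Proof.
move=> a0 h; have := perp_decomp a v; rewrite h scale0r addr0 => e.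
by apply: (@ketbra_scale_inv _ v a (dot a a) (dot a v) (dot_neq0 a0)); rewrite e.
Qed.

Lemma ketbra_orth a v : a != 0 -> dot a v = 0 ->
  exists c, ketbra v = c *: ketbra (perp a).
Proof.
move=> a0 h; have := perp_decomp a v; rewrite h scale0r add0r => e.
apply: (@ketbra_scale_inv _ v (perp a) (dot a a) (dot (perp a) v) (dot_neq0 a0)).
by rewrite e.
Qed.

Lemma parallel_orth_eq0 a v x : a != 0 -> dot (perp a) v = 0 -> dot x v = 0 ->
  dot x a != 0 -> v = 0.
Proof.
move=> a0 h1 h2 h3; have := perp_decomp a v; rewrite h1 scale0r addr0 => e.
have : dot x (dot a a *: v) = dot x (dot a v *: a) by rewrite e.
rewrite !dotZr h2 mulr0 => /esym/eqP; rewrite mulf_eq0 (negbTE h3) orbF.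
move/eqP => hav; move: e; rewrite hav scale0r => /eqP.
by rewrite scaler_eq0 (negbTE (dot_neq0 a0)) => /eqP.
Qed.

End QubitGeometry.

Section OneWayForms.
Variable C : numClosedFieldType.

(* Effects of one-way measurements: Alice (resp. Bob) measures {E, 1 - E}
   and the other party measures a projective measurement chosen according
   to the outcome. *)
Definition alice_first (P : 'M[C]_(2 * 2)) := exists E Q0 Q1 : 'M[C]_2,
  [/\ proj E, proj Q0, proj Q1 & P = kron E Q0 + kron (1%:M - E) Q1].

Definition bob_first (P : 'M[C]_(2 * 2)) := exists E Q0 Q1 : 'M[C]_2,
  [/\ proj E, proj Q0, proj Q1 & P = kron Q0 E + kron Q1 (1%:M - E)].

Lemma proj_block_left m n (E F : 'M[C]_m) (S0 S1 : 'M[C]_n) (P : 'M[C]_(m * n)) :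
  proj E -> E != 0 -> E *m F = 0 -> F *m E = 0 -> proj P ->
  P = kron E S0 + kron F S1 -> proj S0.
Proof.
move=> [aE iE] E0 EF FE [aP iP] hP.
have h1 : P *m kron E 1%:M = kron E S0.
  by rewrite hP mulmxDl !kron_mul iE FE !mulmx1 kron0l addr0.
have h2 : kron E 1%:M *m P = kron E S0.
  by rewrite hP mulmxDr !kron_mul iE EF !mul1mx kron0l addr0.
split; apply/eqP; rewrite -subr_eq0; apply/eqP; apply: (kron_eq0l E0).
  by rewrite kronBr -{1}aE -kron_adj -h1 dagM aP kron_adj aE dag1 h2 h1 subrr.
rewrite kronBr -{1}iE -kron_mul -{1}h2 -h1 -mulmxA (mulmxA P) iP mulmxA h2 h1.
by rewrite kron_mul iE mulmx1 subrr.
Qed.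

Lemma proj_block_right m n (E F : 'M[C]_m) (S0 S1 : 'M[C]_n) (P : 'M[C]_(n * m)) :
  proj E -> E != 0 -> E *m F = 0 -> F *m E = 0 -> proj P ->
  P = kron S0 E + kron S1 F -> proj S0.
Proof.
move=> [aE iE] E0 EF FE [aP iP] hP.
have h1 : P *m kron 1%:M E = kron S0 E.
  by rewrite hP mulmxDl !kron_mul iE FE !mulmx1 kron0r addr0.
have h2 : kron 1%:M E *m P = kron S0 E.
  by rewrite hP mulmxDr !kron_mul iE EF !mul1mx kron0r addr0.
split; apply/eqP; rewrite -subr_eq0; apply/eqP; apply: (kron_eq0r E0).
  by rewrite kronBl -{1}aE -kron_adj -h1 dagM aP kron_adj aE dag1 h2 h1 subrr.
rewrite kronBl -{1}iE -kron_mul -{1}h2 -h1 -mulmxA (mulmxA P) iP mulmxA h2 h1.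
by rewrite kron_mul iE mulmx1 subrr.
Qed.

Lemma vec_proj (e : 'cV[C]_2) : e != 0 ->
  let E := (dot e e)^-1 *: ketbra e in
  [/\ proj E, E != 0, 1%:M - E != 0 & 1%:M - E = (dot e e)^-1 *: ketbra (perp e)].
Proof.
move=> e0 E; have ne := dot_neq0 e0.
have hc : ((dot e e)^-1)^* = (dot e e)^-1 by rewrite geC0_conj ?invr_ge0 ?dot_ge0.
have trE : \tr E = 1.
  by rewrite mxtraceZ /ketbra mxtrace_mulC trace_mx11 mulVf.
split.
- split; first by rewrite /E dagZ dag_ketbra hc.
  rewrite /E -scalemxAl -scalemxAr ketbra_mul scalerA /ketbra.
  by rewrite scalerA -mulrA mulVf // mulr1.
- by apply: contra_neq (oner_neq0 C) => hE; rewrite -trE hE mxtrace0.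
- apply/eqP => h; have hE : E = 1%:M by apply/eqP; rewrite eq_sym -subr_eq0 h.
  by move: trE; rewrite hE mxtrace1 => /eqP; rewrite pnatr_eq1.
- have := ketbra_perp_sum e; move/(congr1 (fun X => (dot e e)^-1 *: X)).
  rewrite scalerDr scalerA mulVf // scale1r => h.
  by rewrite /E -h addrC addKr.
Qed.

Lemma alice_first_frame (e : 'cV[C]_2) (R0 R1 : 'M[C]_2) (P : 'M[C]_(2 * 2)) :
  e != 0 -> proj P ->
  P = kron (ketbra e) R0 + kron (ketbra (perp e)) R1 -> alice_first P.
Proof.
move=> e0 pP hP; have [pE E0 E1 eF] := vec_proj e0.
set E := _ *: ketbra e in pE E0 E1 eF.
have ne := dot_neq0 e0.
have hP' : P = kron E (dot e e *: R0) + kron (1%:M - E) (dot e e *: R1).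
  by rewrite eF /E !kronZl !kronZr !scalerA !mulVf // !scale1r.
have EF : E *m (1%:M - E) = 0 by rewrite mulmxBr mulmx1 pE.2 subrr.
have FE : (1%:M - E) *m E = 0 by rewrite mulmxBl mul1mx pE.2 subrr.
exists E, (dot e e *: R0), (dot e e *: R1); split => //.
- exact: proj_block_left pE E0 EF FE pP hP'.
- by apply: (proj_block_left (proj_compl pE) E1 FE EF pP); rewrite hP' addrC.
Qed.

Lemma bob_first_frame (e : 'cV[C]_2) (R0 R1 : 'M[C]_2) (P : 'M[C]_(2 * 2)) :
  e != 0 -> proj P ->
  P = kron R0 (ketbra e) + kron R1 (ketbra (perp e)) -> bob_first P.
Proof.
move=> e0 pP hP; have [pE E0 E1 eF] := vec_proj e0.
set E := _ *: ketbra e in pE E0 E1 eF.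
have ne := dot_neq0 e0.
have hP' : P = kron (dot e e *: R0) E + kron (dot e e *: R1) (1%:M - E).
  by rewrite eF /E !kronZl !kronZr !scalerA !mulfV // !scale1r.
have EF : E *m (1%:M - E) = 0 by rewrite mulmxBr mulmx1 pE.2 subrr.
have FE : (1%:M - E) *m E = 0 by rewrite mulmxBl mul1mx pE.2 subrr.
exists E, (dot e e *: R0), (dot e e *: R1); split => //.
- exact: proj_block_right pE E0 EF FE pP hP'.
- by apply: (proj_block_right (proj_compl pE) E1 FE EF pP); rewrite hP' addrC.
Qed.

Lemma alice_first_compl (P : 'M[C]_(2 * 2)) : alice_first P -> alice_first (1%:M - P).
Proof.
move=> [E [Q0 [Q1 [pE p0 p1 ->]]]].
exists E, (1%:M - Q0), (1%:M - Q1); split; [done|exact: proj_compl|exact: proj_compl|].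
have h1 : (1%:M : 'M[C]_(2 * 2)) = kron E 1%:M + kron (1%:M - E) 1%:M.
  by rewrite -kronDl addrC subrK kron11.
by rewrite {1}h1 !kronBr opprD addrACA.
Qed.

Lemma bob_first_compl (P : 'M[C]_(2 * 2)) : bob_first P -> bob_first (1%:M - P).
Proof.
move=> [E [Q0 [Q1 [pE p0 p1 ->]]]].
exists E, (1%:M - Q0), (1%:M - Q1); split; [done|exact: proj_compl|exact: proj_compl|].
have h1 : (1%:M : 'M[C]_(2 * 2)) = kron 1%:M E + kron 1%:M (1%:M - E).
  by rewrite -kronDr addrC subrK kron11.
by rewrite {1}h1 !kronBl opprD addrACA.
Qed.

End OneWayForms.

Section ProductSumStructure.
Variable C : numClosedFieldType.
Notation qubit_pair := ('cV[C]_2 * 'cV[C]_2)%type.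

Lemma prod_ket_mul m n (x y : 'cV[C]_m * 'cV[C]_n) :
  prod_ket x *m prod_ket y =
  (dot x.1 y.1 * dot x.2 y.2) *: kron (x.1 *m adj y.1) (x.2 *m adj y.2).
Proof. by rewrite /prod_ket kron_mul !ketbra_mul kronZl kronZr scalerA. Qed.

Lemma prod_ket_mul_orth m n (x y : 'cV[C]_m * 'cV[C]_n) :
  dot x.1 y.1 = 0 \/ dot x.2 y.2 = 0 -> prod_ket x *m prod_ket y = 0.
Proof. by rewrite prod_ket_mul => -[] ->; rewrite ?mul0r ?mulr0 scale0r. Qed.

(* Conversely, two orthogonal product sums have pairwise orthogonal terms:
   the trace of their product is a sum of the nonnegative overlaps
   |<x1, y1> <x2, y2>|^2. *)
Lemma prod_sums_orth m n (s1 s2 : seq ('cV[C]_m * 'cV[C]_n)) :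
  (\sum_(x <- s1) prod_ket x) *m (\sum_(y <- s2) prod_ket y) = 0 ->
  forall x y, x \in s1 -> y \in s2 -> dot x.1 y.1 = 0 \/ dot x.2 y.2 = 0.
Proof.
move=> o x y hx hy.
pose g (x y : 'cV[C]_m * 'cV[C]_n) := (dot x.1 y.1 * dot x.2 y.2) * (dot x.1 y.1 * dot x.2 y.2)^*.
have g_ge0 x' y' : 0 <= g x' y' by apply: mul_conjC_ge0.
have tr_g x' y' : \tr (prod_ket x' *m prod_ket y') = g x' y'.
  by rewrite /prod_ket kron_mul mxtrace_kron !mxtrace_ketbra_mul /g rmorphM; ring.
have /eqP : \sum_(x <- s1) \sum_(y <- s2) g x y = 0.
  rewrite -[RHS](mxtrace0 C (m * n)) -o mulmx_suml mxtrace_sum; apply: eq_bigr => x' _.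
  by rewrite mulmx_sumr mxtrace_sum; apply: eq_bigr => y' _.
rewrite psumr_eq0 => [/allP/(_ x hx) /=|x' _]; last exact: sumr_ge0.
rewrite psumr_eq0 => [/allP/(_ y hy) /=|//].
by rewrite /g mul_conjC_eq0 mulf_eq0 => /orP [] /eqP; [left|right].
Qed.

Lemma orth_terms_alice_first (a : 'cV[C]_2) (s : seq qubit_pair) (P : 'M[C]_(2 * 2)) :
  a != 0 -> proj P -> P = \sum_(x <- s) prod_ket x ->
  (forall x, x \in s -> x.2 = 0 \/ dot a x.1 = 0) -> alice_first P.
Proof.
move=> a0 pP eP hs.
pose S M := exists R : 'M[C]_2, M = kron (ketbra (perp a)) R.
suff [R eR] : S (\sum_(x <- s) prod_ket x).
  by apply: (alice_first_frame (R0 := 0) (R1 := R) a0 pP); rewrite kron0r add0r eP.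
rewrite big_seq; apply: (big_ind S) => [|_ _ [R1 ->] [R2 ->]|[u v] /hs [/= ->|/= h]].
- by exists 0; rewrite kron0r.
- by exists (R1 + R2); rewrite kronDr.
- by exists 0; rewrite /prod_ket ketbra0 !kron0r.
- have [c hc] := ketbra_orth a0 h.
  by exists (c *: ketbra v); rewrite /prod_ket hc kronZl kronZr.
Qed.

Lemma orth_terms_bob_first (b : 'cV[C]_2) (s : seq qubit_pair) (P : 'M[C]_(2 * 2)) :
  b != 0 -> proj P -> P = \sum_(x <- s) prod_ket x ->
  (forall x, x \in s -> x.1 = 0 \/ dot b x.2 = 0) -> bob_first P.
Proof.
move=> b0 pP eP hs.
pose S M := exists R : 'M[C]_2, M = kron R (ketbra (perp b)).
suff [R eR] : S (\sum_(x <- s) prod_ket x).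
  by apply: (bob_first_frame (R0 := 0) (R1 := R) b0 pP); rewrite kron0l add0r eP.
rewrite big_seq; apply: (big_ind S) => [|_ _ [R1 ->] [R2 ->]|[u v] /hs [/= ->|/= h]].
- by exists 0; rewrite kron0l.
- by exists (R1 + R2); rewrite kronDl.
- by exists 0; rewrite /prod_ket ketbra0 !kron0l.
- have [c hc] := ketbra_orth b0 h.
  by exists (c *: ketbra u); rewrite /prod_ket hc kronZl kronZr.
Qed.

Lemma outer_mul_adj (p a : 'cV[C]_2) :
  (p *m adj a) *m adj (p *m adj a) = dot a a *: ketbra p.
Proof.
rewrite dagM dagK mulmxA -(mulmxA p) [adj a *m a]mx11_scalar.
by rewrite mul_mx_scalar -scalemxAl.
Qed.

(* A projector P = al W1 + be W2 combining two product projectors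
   W1 = |ab><ab|, W2 = |pq><pq|, that fixes W1, is a one-way effect: either
   p is orthogonal or parallel to a, or q to b, or else P W1 = W1 forces
   W2 to be proportional to W1. *)
Lemma two_product_projector (a b p q : 'cV[C]_2) (al be : C) (P : 'M[C]_(2 * 2)) :
  a != 0 -> b != 0 -> proj P ->
  P = al *: prod_ket (a, b) + be *: prod_ket (p, q) ->
  P *m prod_ket (a, b) = prod_ket (a, b) ->
  alice_first P \/ bob_first P.
Proof.
move=> a0 b0 pP eP fixW1.
set W1 := prod_ket (a, b) in eP fixW1 *; set W2 := prod_ket (p, q) in eP *.
have AW1 c : P = c *: W1 -> alice_first P.
  move=> hc; apply: (alice_first_frame (R0 := c *: ketbra b) (R1 := 0) a0 pP).
  by rewrite hc kron0r addr0 kronZr.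
pose Z := kron (p *m adj a) (q *m adj b).
have W1W1 : W1 *m W1 = (dot a a * dot b b) *: W1 by rewrite prod_ket_mul.
have star : W1 = (al * (dot a a * dot b b)) *: W1 + (be * (dot p a * dot q b)) *: Z.
  by rewrite -{1}fixW1 eP mulmxDl -!scalemxAl W1W1 prod_ket_mul !scalerA.
have [be0|be_neq0] := eqVneq be 0.
  by left; apply: (AW1 al); rewrite eP be0 scale0r addr0.
have [pa0|pa_neq0] := eqVneq (dot p a) 0.
  left; have [c hc] := ketbra_orth a0 (dotC0 pa0).
  apply: (alice_first_frame (R0 := al *: ketbra b) (R1 := (be * c) *: ketbra q) a0 pP).
  by rewrite eP /W1 /W2 /prod_ket hc kronZl !kronZr scalerA.
have [qb0|qb_neq0] := eqVneq (dot q b) 0.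
  right; have [c hc] := ketbra_orth b0 (dotC0 qb0).
  apply: (bob_first_frame (R0 := al *: ketbra a) (R1 := (be * c) *: ketbra p) b0 pP).
  by rewrite eP /W1 /W2 /prod_ket hc kronZr !kronZl scalerA.
pose g := be * (dot p a * dot q b).
have g0 : g != 0 by rewrite /g !mulf_neq0.
pose mu := g^-1 * (1 - al * (dot a a * dot b b)).
have hZ : Z = mu *: W1.
  apply: (scalerI g0); rewrite scalerA /mu mulVKf // scalerBl scale1r.
  by rewrite {1}star addrAC subrr add0r.
have nab : dot a a * dot b b != 0 by rewrite mulf_neq0 ?dot_neq0.
have ZZ : Z *m adj Z = (dot a a * dot b b) *: W2.
  by rewrite /Z kron_adj kron_mul !outer_mul_adj kronZl kronZr scalerA.
have W1adj : adj W1 = W1 by rewrite /W1 /prod_ket kron_adj !dag_ketbra.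
have W2eq : W2 = (mu * mu^*) *: W1.
  apply: (scalerI nab); rewrite -ZZ hZ dagZ W1adj -scalemxAl -scalemxAr W1W1.
  by rewrite !scalerA; congr (_ *: _); ring.
by left; apply: (AW1 (al + be * (mu * mu^*))); rewrite eP W2eq scalerA -scalerDl.
Qed.

(* The generic case of the structure theorem: P1 contains a product term
   (a, b), and P2 contains terms (x1, y1), (x2, y2) that are not aligned with
   it on Alice's, resp. Bob's side. *)
Section GenericPosition.
Variables (s1 s2 : seq qubit_pair) (a b x1 y1 x2 y2 : 'cV[C]_2).
Hypothesis cross : forall x y, x \in s1 -> y \in s2 ->
  dot x.1 y.1 = 0 \/ dot x.2 y.2 = 0.
Hypotheses (a0 : a != 0) (b0 : b != 0) (y10 : y1 != 0) (x20 : x2 != 0).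
Hypotheses (ax1 : dot a x1 != 0) (by2 : dot b y2 != 0).
Hypotheses (ab_s1 : (a, b) \in s1) (j1_s2 : (x1, y1) \in s2) (j2_s2 : (x2, y2) \in s2).

(* Orthogonality to (a, b) is then carried by the other factor. *)
Let x10 : x1 != 0. Proof. by apply: contra_neq ax1 => ->; rewrite dot0r. Qed.
Let y20 : y2 != 0. Proof. by apply: contra_neq by2 => ->; rewrite dot0r. Qed.
Let x1a : dot x1 a != 0. Proof. by rewrite dotC conjC_eq0. Qed.
Let y2b : dot y2 b != 0. Proof. by rewrite dotC conjC_eq0. Qed.
Let by1 : dot b y1 = 0.
Proof. by case: (cross ab_s1 j1_s2) => //= h; move: ax1; rewrite h eqxx. Qed.
Let ax2 : dot a x2 = 0.
Proof. by case: (cross ab_s1 j2_s2) => //= h; move: by2; rewrite h eqxx. Qed.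

Lemma term_in_span x : x \in s1 -> exists al be,
  prod_ket x = al *: prod_ket (a, b) + be *: prod_ket (perp x1, perp y2).
Proof.
case: x => u v hx.
have [->|u0] := eqVneq u 0.
  by exists 0, 0; rewrite /prod_ket ketbra0 kron0l !scale0r addr0.
have [->|v0] := eqVneq v 0.
  by exists 0, 0; rewrite /prod_ket ketbra0 kron0r !scale0r addr0.
have ua : dot u x2 = 0 -> dot (perp a) u = 0.
  by move=> h; apply: (orth_common x20 (dotC0 ax2) (dotC0 h)).
have vb : dot v y1 = 0 -> dot (perp b) v = 0.
  by move=> h; apply: (orth_common y10 (dotC0 by1) (dotC0 h)).
case: (cross hx j1_s2) => /= h1; case: (cross hx j2_s2) => /= h2.
- by case/eqP: u0; apply: (parallel_orth_eq0 a0 (ua h2) (dotC0 h1) x1a).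
- have [c hc] := ketbra_orth x10 (dotC0 h1).
  have [c' hc'] := ketbra_orth y20 (dotC0 h2).
  exists 0, (c * c'); rewrite /prod_ket hc hc' kronZl kronZr scalerA scale0r add0r.
  by rewrite mulrC.
- have [c hc] := ketbra_parallel a0 (ua h2).
  have [c' hc'] := ketbra_parallel b0 (vb h1).
  exists (c * c'), 0; rewrite /prod_ket hc hc' kronZl kronZr scalerA scale0r addr0.
  by rewrite mulrC.
- by case/eqP: v0; apply: (parallel_orth_eq0 b0 (vb h1) (dotC0 h2) y2b).
Qed.

(* Hence P1 = al |ab><ab| + be |p q><p q| with p = perp x1, q = perp y2,
   and P1 fixes |ab><ab| since P2 annihilates it. *)
Lemma generic_position_one_way (P1 : 'M[C]_(2 * 2)) :
  proj P1 -> P1 = \sum_(x <- s1) prod_ket x ->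
  P1 + \sum_(y <- s2) prod_ket y = 1%:M ->
  alice_first P1 \/ bob_first P1.
Proof.
move=> pP1 e1 hsum.
pose S M := exists al be,
  M = al *: prod_ket (a, b) + be *: prod_ket (perp x1, perp y2).
have [al [be eP1]] : S P1.
  rewrite e1 big_seq; apply: (big_ind S) => [|_ _ [a1 [b1 ->]] [a2 [b2 ->]]|x];
    [by exists 0, 0; rewrite !scale0r addr0
    |by exists (a1 + a2), (b1 + b2); rewrite !scalerDl addrACA
    |exact: term_in_span].
apply: (two_product_projector a0 b0 pP1 eP1).
have P2W1 : (\sum_(y <- s2) prod_ket y) *m prod_ket (a, b) = 0.
  rewrite mulmx_suml big_seq big1 // => y hy; apply: prod_ket_mul_orth.
  by case: (cross ab_s1 hy) => /dotC0 h; [left|right].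
by move/(congr1 (mulmx^~ (prod_ket (a, b)))): hsum; rewrite mulmxDl P2W1 addr0 mul1mx.
Qed.

End GenericPosition.

Theorem complementary_product_sums_one_way (P1 P2 : 'M[C]_(2 * 2)) :
  proj P1 -> proj P2 -> P1 + P2 = 1%:M -> prod_sum P1 -> prod_sum P2 ->
  alice_first P1 \/ bob_first P1.
Proof.
move=> pP1 pP2 hsum [s1 e1] [s2 e2].
have eP1 : P1 = 1%:M - P2 by rewrite -hsum addrK.
have o12 : (\sum_(x <- s1) prod_ket x) *m (\sum_(y <- s2) prod_ket y) = 0.
  by rewrite -e1 -e2 eP1 mulmxBl mul1mx pP2.2 subrr.
have cross := prod_sums_orth o12.
have [/allP deg|/allPn [[a b] ab_s1]] :=
  boolP (all (fun x => (x.1 == 0) || (x.2 == 0)) s1).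
  left; exists 1%:M, 0, 0; split; [exact: proj1|exact: proj0|exact: proj0|].
  rewrite e1 subrr !kron0r addr0 big_seq big1 // => -[u v] /deg /orP [] /eqP /= ->.
    by rewrite /prod_ket ketbra0 kron0l.
  by rewrite /prod_ket ketbra0 kron0r.
rewrite negb_or => /andP [a0 b0].
have [/allP hA|/allPn [[x1 y1] j1_s2]] :=
  boolP (all (fun y => (y.2 == 0) || (dot a y.1 == 0)) s2).
  left; rewrite eP1; apply/alice_first_compl/(orth_terms_alice_first a0 pP2 e2).
  by move=> y /hA /orP [] /eqP; [left|right].
rewrite negb_or => /andP [y10 ax1].
have [/allP hB|/allPn [[x2 y2] j2_s2]] :=
  boolP (all (fun y => (y.1 == 0) || (dot b y.2 == 0)) s2).
  right; rewrite eP1; apply/bob_first_compl/(orth_terms_bob_first b0 pP2 e2).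
  by move=> y /hB /orP [] /eqP; [left|right].
rewrite negb_or => /andP [x20 by2].
by apply: (generic_position_one_way cross a0 b0 y10 x20 ax1 by2 ab_s1 j1_s2 j2_s2);
  rewrite -?e2.
Qed.

End ProductSumStructure.

Section OneWayProtocols.
Variable C : numClosedFieldType.

Definition proj_kraus (Q : 'M[C]_2) (j : 'I_2) : 'M[C]_2 :=
  if j == 0 then Q else 1%:M - Q.

Lemma proj_kraus_complete (Q : 'M[C]_2) : proj Q ->
  \sum_(j < 2) adj (proj_kraus Q j) *m proj_kraus Q j = 1%:M.
Proof.
move=> pQ; have [a1 i1] := pQ; have [a2 i2] := proj_compl pQ.
by rewrite big_ord_recl big_ord1 /proj_kraus /= a1 i1 a2 i2 addrC subrK.
Qed.

Definition alice_measures (Q : 'M[C]_2) : LOCC C 2 2 :=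
  @AliceStep C 2 2 2 (fun _ => 2%N) (proj_kraus Q) (fun j => Leaf C 2 2 (j != 0)).

Definition bob_measures (Q : 'M[C]_2) : LOCC C 2 2 :=
  @BobStep C 2 2 2 (fun _ => 2%N) (proj_kraus Q) (fun j => Leaf C 2 2 (j != 0)).

Definition alice_then_bob (E Q0 Q1 : 'M[C]_2) : LOCC C 2 2 :=
  @AliceStep C 2 2 2 (fun _ => 2%N) (proj_kraus E)
    (fun j => bob_measures (if j == 0 then Q0 else Q1)).

Definition bob_then_alice (E Q0 Q1 : 'M[C]_2) : LOCC C 2 2 :=
  @BobStep C 2 2 2 (fun _ => 2%N) (proj_kraus E)
    (fun j => alice_measures (if j == 0 then Q0 else Q1)).

Lemma alice_then_bob_wf E Q0 Q1 : proj E -> proj Q0 -> proj Q1 ->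
  LOCC_wf (alice_then_bob E Q0 Q1).
Proof.
move=> pE p0 p1; split; first exact: proj_kraus_complete.
by move=> j; split => //; case: (j == 0); apply: proj_kraus_complete.
Qed.

Lemma bob_then_alice_wf E Q0 Q1 : proj E -> proj Q0 -> proj Q1 ->
  LOCC_wf (bob_then_alice E Q0 Q1).
Proof.
move=> pE p0 p1; split; first exact: proj_kraus_complete.
by move=> j; split => //; case: (j == 0); apply: proj_kraus_complete.
Qed.

Lemma alice_measures_effect Q : proj Q ->
  LOCC_effect false (alice_measures Q) = kron Q 1%:M.
Proof.
move=> [a1 i1] /=; rewrite big_ord_recl big_ord1 /proj_kraus /=.
by rewrite mulmx0 mul0mx addr0 mulmx1 kron_adj_mul dag1 mulmx1 a1 i1.
Qed.

Lemma bob_measures_effect Q : proj Q ->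
  LOCC_effect false (bob_measures Q) = kron 1%:M Q.
Proof.
move=> [a1 i1] /=; rewrite big_ord_recl big_ord1 /proj_kraus /=.
by rewrite mulmx0 mul0mx addr0 mulmx1 kron_adj_mul dag1 mulmx1 a1 i1.
Qed.

Lemma alice_then_bob_effect E Q0 Q1 : proj E -> proj Q0 -> proj Q1 ->
  LOCC_effect false (alice_then_bob E Q0 Q1) = kron E Q0 + kron (1%:M - E) Q1.
Proof.
move=> pE p0 p1; have [a1 i1] := pE; have [a2 i2] := proj_compl pE.
move: (bob_measures_effect p0) (bob_measures_effect p1) => /= e0 e1.
rewrite /= big_ord_recl big_ord1 /proj_kraus /= e0 e1.
by rewrite !kron_adj !dag1 !kron_mul !mul1mx !mulmx1 a1 i1 a2 i2.
Qed.

Lemma bob_then_alice_effect E Q0 Q1 : proj E -> proj Q0 -> proj Q1 ->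
  LOCC_effect false (bob_then_alice E Q0 Q1) = kron Q0 E + kron Q1 (1%:M - E).
Proof.
move=> pE p0 p1; have [a1 i1] := pE; have [a2 i2] := proj_compl pE.
move: (alice_measures_effect p0) (alice_measures_effect p1) => /= e0 e1.
rewrite /= big_ord_recl big_ord1 /proj_kraus /= e0 e1.
by rewrite !kron_adj !dag1 !kron_mul !mul1mx !mulmx1 a1 i1 a2 i2.
Qed.

Lemma one_way_LOCC (P : 'M[C]_(2 * 2)) : alice_first P \/ bob_first P ->
  exists p : LOCC C 2 2, LOCC_wf p /\ LOCC_effect false p = P.
Proof.
case=> -[E [Q0 [Q1 [pE p0 p1 ->]]]].
  exists (alice_then_bob E Q0 Q1).
  by split; [apply: alice_then_bob_wf | apply: alice_then_bob_effect].
exists (bob_then_alice E Q0 Q1).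
by split; [apply: bob_then_alice_wf | apply: bob_then_alice_effect].
Qed.

End OneWayProtocols.

Section Distinguishability.
Variable C : numClosedFieldType.

Definition sep_distinguishable (rho1 rho2 : 'M[C]_(2 * 2)) : Prop :=
  exists Pi1 Pi2 : 'M[C]_(2 * 2),
    separable_POVM Pi1 Pi2 /\ perfectly_distinguishes Pi1 Pi2 rho1 rho2.

Definition LOCC_distinguishable (rho1 rho2 : 'M[C]_(2 * 2)) : Prop :=
  exists p : LOCC C 2 2, LOCC_wf p /\
    perfectly_distinguishes (LOCC_effect false p) (LOCC_effect true p) rho1 rho2.

Definition separable_supports (rho1 rho2 : 'M[C]_(2 * 2)) : Prop :=
  forall P1 P2 : 'M[C]_(2 * 2),
    supp_proj P1 rho1 -> supp_proj P2 rho2 -> separable P1 /\ separable P2.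

Lemma LOCC_sep_distinguishable (rho1 rho2 : 'M[C]_(2 * 2)) :
  LOCC_distinguishable rho1 rho2 -> sep_distinguishable rho1 rho2.
Proof.
move=> [p [hw hpd]]; exists (LOCC_effect false p), (LOCC_effect true p).
have sep o : separable (LOCC_effect o p).
  by apply/separable_prod_sum/LOCC_effect_prod_sum.
by split => //; split; [apply: sep | split; [apply: sep | apply: LOCC_effect_sum]].
Qed.

Variables rho1 rho2 : 'M[C]_(2 * 2).
Hypotheses (d1 : density rho1) (d2 : density rho2).
Hypothesis compl : forall P1 P2 : 'M[C]_(2 * 2),
  supp_proj P1 rho1 -> supp_proj P2 rho2 -> P1 + P2 = 1%:M.

Lemma sep_distinguishable_supports :
  sep_distinguishable rho1 rho2 -> separable_supports rho1 rho2.
Proof.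
move=> [Pi1 [Pi2 [hs hpd]]] P1 P2 h1 h2.
have [<- <-] := sep_povm_supp d1.1 d2.1 hs hpd h1 h2 (compl h1 h2).
by case: hs => [s1 [s2 _]].
Qed.

Lemma supports_sep_distinguishable :
  separable_supports rho1 rho2 -> sep_distinguishable rho1 rho2.
Proof.
move=> hsep; have [P1 h1] := supp_proj_exists d1.1.1.
have [P2 h2] := supp_proj_exists d2.1.1.
have [s1 s2] := hsep _ _ h1 h2.
exists P1, P2; split; first by do !split => //; apply: compl.
exact: supp_distinguishes d1 d2 h1 h2 (compl h1 h2).
Qed.

Lemma supports_LOCC_distinguishable :
  separable_supports rho1 rho2 -> LOCC_distinguishable rho1 rho2.
Proof.
move=> hsep; have [P1 h1] := supp_proj_exists d1.1.1.
have [P2 h2] := supp_proj_exists d2.1.1.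
have [/separable_prod_sum s1 /separable_prod_sum s2] := hsep _ _ h1 h2.
have hsum := compl h1 h2.
have [p [hw he1]] := one_way_LOCC (complementary_product_sums_one_way
  (supp_proj_proj h1) (supp_proj_proj h2) hsum s1 s2).
have he2 : LOCC_effect true p = P2.
  by apply: (addrI P1); rewrite hsum -he1 LOCC_effect_sum.
by exists p; rewrite he1 he2; split => //; apply: supp_distinguishes.
Qed.

End Distinguishability.

Unset Implicit Arguments.

Theorem mainTheorem2 (C : numClosedFieldType) (rho1 rho2 : 'M[C]_(2 * 2)) :
  density rho1 -> density rho2 ->
  \rank rho1 = 2%N -> \rank rho2 = 2%N ->
  orth_supports rho1 rho2 ->
  [/\ ((exists Pi1 Pi2 : 'M[C]_(2 * 2),
          separable_POVM Pi1 Pi2 /\ perfectly_distinguishes Pi1 Pi2 rho1 rho2)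
       <-> (exists p : LOCC C 2 2,
          LOCC_wf p /\
          perfectly_distinguishes (LOCC_effect false p) (LOCC_effect true p)
                                  rho1 rho2)),
      ((exists p : LOCC C 2 2,
          LOCC_wf p /\
          perfectly_distinguishes (LOCC_effect false p) (LOCC_effect true p)
                                  rho1 rho2)
       <-> (forall P1 P2 : 'M[C]_(2 * 2),
              supp_proj P1 rho1 -> supp_proj P2 rho2 ->
              separable P1 /\ separable P2))
    & ((forall P1 P2 : 'M[C]_(2 * 2),
              supp_proj P1 rho1 -> supp_proj P2 rho2 ->
              separable P1 /\ separable P2)
       <-> (exists Pi1 Pi2 : 'M[C]_(2 * 2),
          separable_POVM Pi1 Pi2 /\ perfectly_distinguishes Pi1 Pi2 rho1 rho2))].
Proof.
move=> d1 d2 r1 r2 ho.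
have compl P1 P2 : supp_proj P1 rho1 -> supp_proj P2 rho2 -> P1 + P2 = 1%:M.
  by apply: supp_proj_complementary ho; rewrite r1 r2.
have AC := sep_distinguishable_supports d1 d2 compl.
have CA := supports_sep_distinguishable d1 d2 compl.
have BA := @LOCC_sep_distinguishable C rho1 rho2.
have CB := supports_LOCC_distinguishable d1 d2 compl.
by split; [split=> [/AC/CB|/BA] | split=> [/BA/AC|/CB] | split=> [/CA|/AC]].
Qed.
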